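(* Let $g\geqslant1$ be odd. An element $u\in\mathbb{C}[\alpha,\gamma]$ is a unit modulo $J_g^-$ if and only if $\mathrm{ev}^\pm_j(u)\neq0$ for both signs and all $j=1,\ldots,(g-1)/2$, where $\mathrm{ev}^\pm_j(f)=f\big(\pm4(g-2j),\,0\big)$.
   Context: $\zeta_k^-\in\mathbb{C}[\alpha,\gamma]$: $\zeta^-_i=0$ for $i<0$, $\zeta^-_0=1$, $\zeta^-_{k+1}=\alpha\zeta^-_k-16k^2\zeta^-_{k-1}+2k(k-1)\gamma\zeta^-_{k-2}$ for $k$ odd and $\zeta^-_{k+1}=\alpha\zeta^-_k+2k(k-1)\gamma\zeta^-_{k-2}$ for $k$ even; $J^-_k=(\zeta^-_k,\zeta^-_{k+1},\zeta^-_{k+2})$. (These are the specializations at $\beta=-8$ of $\zeta_{k+1}=\alpha\zeta_k+k^2(\beta+(-1)^k8)\zeta_{k-1}+2k(k-1)\gamma\zeta_{k-2}$.) ''Unit modulo $J_g^-$'' means the image in $\mathbb{C}[\alpha,\gamma]/J_g^-$ is invertible; the maps $\mathrm{ev}^\pm_j$ vanish on $J_g^-$. *)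

From HB Require Import structures.
From mathcomp Require Import all_boot all_order all_algebra.
From mathcomp Require Import reals complex.
Set Implicit Arguments. Unset Strict Implicit. Unset Printing Implicit Defensive.
Import Order.TTheory GRing.Theory Num.Theory.
Local Open Scope ring_scope.

(* C = complex R for R : realType (i.e. the complex numbers).
   C[alpha,gamma] is modelled as {poly {poly C}}: the inner variable is
   alpha, the outer variable is gamma. *)
Notation CC R := (complex R).
Notation Cag R := {poly {poly (CC R)}}.

Definition alpha (R : realType) : Cag R := ('X : {poly CC R})%:P.
Definition gamma (R : realType) : Cag R := 'X.

Definition eval2 (R : realType) (f : Cag R) (a c : CC R) : CC R :=
  (map_poly (fun q : {poly CC R} => q.[a]) f).[c].

(* triple (zeta_k, zeta_{k-1}, zeta_{k-2}) of the beta = -8 recursion *)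
Fixpoint zeta_triple (R : realType) (k : nat) : Cag R * Cag R * Cag R :=
  match k with
  | 0 => (1, 0, 0)
  | k'.+1 =>
      let: (z, z1, z2) := zeta_triple R k' in
      (alpha R * z
         - (if odd k' then (16 * k' ^ 2)%:R * z1 else 0)
         + (2 * k' * (k' - 1))%:R * gamma R * z2, z, z1)
  end.

Definition zetam (R : realType) (k : nat) : Cag R := (zeta_triple R k).1.1.

Definition unit_mod_J (R : realType) (k : nat) (u : Cag R) : Prop :=
  exists v a b c : Cag R,
    u * v - 1 = a * zetam R k + b * zetam R k.+1 + c * zetam R k.+2.

Definition ev (R : realType) (g : nat) (sgn : bool) (j : nat) (f : Cag R)
  : CC R :=
  eval2 f ((-1) ^+ sgn * (4 * ((g%:Z) - 2 * (j%:Z)))%:~R) 0.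

(* At [gamma = 0] the recursion for [zeta_k] loses its last term, and for
   [g = 2m + 1] the three generators of [J_g] specialise to multiples of
   [zeta_(2m)(alpha, 0) = prod_(i < m) (alpha^2 - 16 (2i + 1)^2)], whose roots
   are exactly the points [+-4 (g - 2j)], [1 <= j <= m].  On the other hand, as the
   [gamma]-coefficient of the recursion does not vanish, [gamma J_n] lies in
   [J_(n+1)], so [gamma^g] lies in [J_g]: being a unit modulo [J_g] is the same
   as being a unit modulo [J_g + (gamma)], i.e. [u(alpha, 0)] being coprime to
   [zeta_(2m)(alpha, 0)]. *)

From HB Require Import structures.
From mathcomp Require Import all_boot all_order all_algebra.
From mathcomp Require Import reals complex.
From mathcomp Require Import ring zify.
Set Implicit Arguments.
Unset Strict Implicit.
Unset Printing Implicit Defensive.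

Import Order.TTheory GRing.Theory Num.Theory.
Local Open Scope ring_scope.

Section Ideal3.

Variables (T : comPzRingType) (p q r : T).

Definition in_ideal3 (f : T) : Prop := exists a b c : T, f = a * p + b * q + c * r.

Lemma in_ideal3_l : in_ideal3 p. Proof. by exists 1, 0, 0; ring. Qed.
Lemma in_ideal3_m : in_ideal3 q. Proof. by exists 0, 1, 0; ring. Qed.
Lemma in_ideal3_r : in_ideal3 r. Proof. by exists 0, 0, 1; ring. Qed.

Lemma in_ideal3D f h : in_ideal3 f -> in_ideal3 h -> in_ideal3 (f + h).
Proof.
move=> [a [b [c ->]]] [a' [b' [c' ->]]].
by exists (a + a'), (b + b'), (c + c'); ring.
Qed.

Lemma in_ideal3Ml h f : in_ideal3 f -> in_ideal3 (h * f).
Proof. by move=> [a [b [c ->]]]; exists (h * a), (h * b), (h * c); ring. Qed.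

Lemma in_ideal3N f : in_ideal3 f -> in_ideal3 (- f).
Proof. by rewrite -mulN1r; apply: in_ideal3Ml. Qed.

Lemma in_ideal3B f h : in_ideal3 f -> in_ideal3 h -> in_ideal3 (f - h).
Proof. by move=> If Ih; apply/in_ideal3D/in_ideal3N. Qed.

(* Modulo the ideal, [1 - e * h] is inverted by the truncated geometric series. *)
Lemma in_ideal3_unit_nilpotent (e u s h : T) n :
  in_ideal3 (e ^+ n) -> in_ideal3 (u * s - 1 + e * h) ->
  exists v, in_ideal3 (u * v - 1).
Proof.
move=> Ien Ius; pose y := e * h; pose W := \sum_(i < n) y ^+ i.
have geomW : (1 - y) * W = 1 - y ^+ n.
  by rewrite -[LHS]opprK -mulNr opprB -subrX1 opprB.
exists (s * W).
have -> : u * (s * W) - 1 = (u * s - 1 + y) * W - y ^+ n.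
  transitivity (u * s * W - (1 - y ^+ n) - y ^+ n); first ring.
  by rewrite -geomW; ring.
by apply: in_ideal3B; rewrite ?/y ?exprMn mulrC; apply: in_ideal3Ml.
Qed.

End Ideal3.

Lemma coprimep_prod_XsubC (F : fieldType) (p : {poly F}) (rs : seq F) :
  coprimep p (\prod_(x <- rs) ('X - x%:P)) = all (fun x => ~~ root p x) rs.
Proof.
elim: rs => [|x rs IH]; first by rewrite big_nil coprimep1.
by rewrite big_cons coprimepMr coprimep_XsubC IH.
Qed.

Lemma polyC_coef0 (R : nzRingType) (f : {poly R}) :
  (f`_0)%:P = f - 'X * drop_poly 1 f.
Proof.
apply/polyP => i; rewrite coefB coefC coefXM coef_drop_poly.
by case: i => [|i]; rewrite ?subr0 // addn1 subrr.
Qed.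

Section Zeta.

Variable R : realType.

Lemma zeta_tripleS k : zeta_triple R k.+1 =
  (alpha R * zetam R k
     - (if odd k then (16 * k ^ 2)%:R * (zeta_triple R k).1.2 else 0)
     + (2 * k * (k - 1))%:R * gamma R * (zeta_triple R k).2,
   zetam R k, (zeta_triple R k).1.2).
Proof. by rewrite /zetam /=; case: (zeta_triple R k) => [[a b] c]. Qed.

Lemma zetamS k :
  zetam R k.+1 = alpha R * zetam R k - (odd k * 16 * k ^ 2)%:R * zetam R k.-1
                 + (2 * k * (k - 1))%:R * gamma R * zetam R k.-2.
Proof.
case: k => [|[|k]]; [by rewrite /zetam /=; ring | by rewrite /zetam /= subnn; ring |].
rewrite {1}/zetam !zeta_tripleS /=.
by case: (odd k); rewrite /= ?mul0r ?mul1n.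
Qed.

Lemma natr_unit_Cag k : k != 0%N -> (k%:R : Cag R) \is a GRing.unit.
Proof.
move=> k_neq0; rewrite -!polyC_natr.
by do 2!apply: rmorph_unit; rewrite unitfE pnatr_eq0.
Qed.

Definition in_J k := in_ideal3 (zetam R k) (zetam R k.+1) (zetam R k.+2).

(* The recursion at index [n + 2] has [gamma]-coefficient [2 (n + 2) (n + 1) != 0]. *)
Lemma gamma_zetam_in_J n : in_J n.+1 (gamma R * zetam R n).
Proof.
have c_unit : ((2 * n.+2 * n.+1)%:R : Cag R) \is a GRing.unit.
  exact: natr_unit_Cag.
rewrite -(mulKr c_unit (gamma R * zetam R n)); apply: in_ideal3Ml.
have -> : (2 * n.+2 * n.+1)%:R * (gamma R * zetam R n) =
    zetam R n.+3 - alpha R * zetam R n.+2 + (odd n * 16 * n.+2 ^ 2)%:R * zetam R n.+1.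
  by rewrite zetamS subSS subn0 /= negbK; ring.
apply: in_ideal3D; first apply: in_ideal3B; last apply: in_ideal3Ml.
- exact: in_ideal3_r.
- by apply: in_ideal3Ml; apply: in_ideal3_m.
- exact: in_ideal3_l.
Qed.

Lemma in_J_gammaM n f : in_J n f -> in_J n.+1 (gamma R * f).
Proof.
move=> [a [b [c ->]]].
have -> : gamma R * (a * zetam R n + b * zetam R n.+1 + c * zetam R n.+2) =
  a * (gamma R * zetam R n) + (gamma R * b) * zetam R n.+1
  + (gamma R * c) * zetam R n.+2 by ring.
apply: in_ideal3D; first apply: in_ideal3D; apply: in_ideal3Ml.
- exact: gamma_zetam_in_J.
- exact: in_ideal3_l.
- exact: in_ideal3_m.
Qed.

Lemma gammaX_in_J n : in_J n (gamma R ^+ n).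
Proof.
elim: n => [|n IH]; first by rewrite expr0; apply: in_ideal3_l.
by rewrite exprS; apply: in_J_gammaM.
Qed.

Definition zetam0 k : {poly CC R} := (zetam R k)`_0.

Lemma zetam0S k :
  zetam0 k.+1 = 'X * zetam0 k - (odd k * 16 * k ^ 2)%:R * zetam0 k.-1.
Proof.
rewrite /zetam0 zetamS coefD coefB !coef0M /alpha /gamma coefX coefC mulr0 mul0r.
by rewrite -!polyC_natr coefC addr0.
Qed.

Lemma dvdp_zetam0 m n : (m.*2 <= n)%N -> zetam0 m.*2 %| zetam0 n.
Proof.
move=> /subnKC <-; move: (n - m.*2)%N => k.
suff: zetam0 m.*2 %| zetam0 (m.*2 + k) /\ zetam0 m.*2 %| zetam0 (m.*2 + k).+1 by case.
elim: k => [|k [IH IHS]].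
  by rewrite addn0 zetam0S odd_double mul0n mul0r subr0 dvdpp dvdp_mull ?dvdpp.
by split; rewrite ?addnS // zetam0S dvdp_sub // dvdp_mull.
Qed.

Definition zeta_root (s : bool) (i : nat) : CC R := (-1) ^+ s * (4 * i.*2.+1)%:R.

Definition zeta_roots m := [seq zeta_root s i | i <- iota 0 m, s <- [:: false; true]].

Lemma zetam0_doubleS m :
  zetam0 m.*2.+2 =
    zetam0 m.*2 * (('X - (zeta_root false m)%:P) * ('X - (zeta_root true m)%:P)).
Proof.
rewrite !zetam0S /= odd_double /= /zeta_root expr0 expr1 mulN1r mul1r.
by rewrite polyCN !polyC_natr; ring.
Qed.

Lemma zetam0_double m : zetam0 m.*2 = \prod_(x <- zeta_roots m) ('X - x%:P).
Proof.
rewrite big_allpairs_dep; elim: m => [|m IH].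
  by rewrite big_nil /zetam0 /= coef1.
rewrite doubleS zetam0_doubleS IH -addn1 iotaD big_cat add0n big_seq1.
by rewrite !big_cons big_nil /= mulr1.
Qed.

Lemma coprimep_zetam0 m p :
  coprimep p (zetam0 m.*2) = all (fun x => ~~ root p x) (zeta_roots m).
Proof. by rewrite zetam0_double coprimep_prod_XsubC. Qed.

Lemma dvdp_coef0_in_J m f : in_J m.*2.+1 f -> zetam0 m.*2 %| f`_0.
Proof.
move=> [a [b [c ->]]]; rewrite !coefD !coef0M.
by rewrite !dvdp_add // dvdp_mull // dvdp_zetam0 // !leqW.
Qed.

(* At [gamma = 0], [16 g^2 zeta_(g-1) = alpha zeta_g - zeta_(g+1)] for odd [g]. *)
Lemma zetam0_in_J_add_gamma m :
  exists h, in_J m.*2.+1 ((zetam0 m.*2)%:P + gamma R * h).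
Proof.
have c_unit : ((16 * m.*2.+1 ^ 2)%:R : Cag R) \is a GRing.unit.
  exact: natr_unit_Cag.
have rec : (16 * m.*2.+1 ^ 2)%:R * (zetam0 m.*2)%:P =
           alpha R * (zetam0 m.*2.+1)%:P - (zetam0 m.*2.+2)%:P.
  rewrite [zetam0 m.*2.+2]zetam0S /= odd_double /= /alpha.
  by rewrite polyCB !polyCM polyC_natr; ring.
pose d k := drop_poly 1 (zetam R k).
exists ((16 * m.*2.+1 ^ 2)%:R^-1 * (alpha R * d m.*2.+1 - d m.*2.+2)).
have -> : (zetam0 m.*2)%:P
          + gamma R * ((16 * m.*2.+1 ^ 2)%:R^-1 * (alpha R * d m.*2.+1 - d m.*2.+2))
          = (16 * m.*2.+1 ^ 2)%:R^-1 * (alpha R * zetam R m.*2.+1 - zetam R m.*2.+2).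
  by rewrite -[(zetam0 m.*2)%:P](mulKr c_unit) rec /zetam0 !polyC_coef0 /gamma; ring.
by apply/in_ideal3Ml/in_ideal3B; [apply/in_ideal3Ml/in_ideal3_l | apply: in_ideal3_m].
Qed.

Lemma unit_mod_J_coprimep m u :
  unit_mod_J m.*2.+1 u <-> coprimep (u`_0) (zetam0 m.*2).
Proof.
split=> [[v [a [b [c uv1]]]] | /Bezout_eq1_coprimepP [[s t] /= bezout]].
  have : zetam0 m.*2 %| (u * v - 1)`_0 by apply: dvdp_coef0_in_J; exists a, b, c.
  rewrite coefB coef0M coef1 /= => /dvdpP [q uv1_0].
  by apply/Bezout_eq1_coprimepP; exists (v`_0, - q) => /=; rewrite mulNr -uv1_0; ring.
have [h Jh] := zetam0_in_J_add_gamma m.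
apply: (@in_ideal3_unit_nilpotent _ _ _ _ (gamma R) u s%:P
          (- (t%:P * h + s%:P * drop_poly 1 u)) m.*2.+1); first exact: gammaX_in_J.
have -> : u * s%:P - 1 + gamma R * (- (t%:P * h + s%:P * drop_poly 1 u)) =
          - t%:P * ((zetam0 m.*2)%:P + gamma R * h).
  by rewrite -polyC1 -bezout polyCD !polyCM (polyC_coef0 u) /gamma; ring.
exact: in_ideal3Ml.
Qed.

Lemma eval2_gamma0 (f : Cag R) a : eval2 f a 0 = (f`_0).[a].
Proof. by rewrite /eval2 horner_coef0 coef_map_id0 ?horner0. Qed.

Lemma ev_zeta_root m s j u :
  (1 <= j <= m)%N -> ev m.*2.+1 s j u = (u`_0).[zeta_root s (m - j)].
Proof.
move=> jm; rewrite /ev eval2_gamma0 /zeta_root.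
have -> : 4 * ((m.*2.+1)%:Z - 2 * j%:Z) = (4 * (m - j).*2.+1)%N :> int by lia.
by rewrite -pmulrn.
Qed.

End Zeta.

Theorem lemma5p3 (R : realType) (g : nat) (hg : odd g) (u : Cag R) :
  unit_mod_J g u <->
  (forall (sgn : bool) (j : nat), (1 <= j <= (g - 1) %/ 2)%N ->
     ev g sgn j u != 0).
Proof.
have [m ->] : exists m, g = m.*2.+1.
  by exists g./2; rewrite -[g in LHS]odd_double_half hg.
have -> : ((m.*2.+1 - 1) %/ 2 = m)%N by rewrite subn1 -muln2 mulnK.
rewrite unit_mod_J_coprimep coprimep_zetam0.
split=> [/all_allpairsP nroot s j jm | ev_neq0].
  rewrite ev_zeta_root //; apply: nroot; first by rewrite mem_iota; lia.
  by case: s.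
apply/all_allpairsP => i s; rewrite mem_iota => /andP[_ ltim] _.
have jm : (1 <= m - i <= m)%N by lia.
by have := ev_neq0 s _ jm; rewrite ev_zeta_root // subKn // ltnW.
Qed.
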